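(* Let $n\ge2$ be even. For $q>0$, let $\omega=(nq,\ldots,nq,-nq,\ldots,-nq)\in\mathbb{R}^n$ (with $n/2$ entries equal to $nq$ and $n/2$ entries equal to $-nq$) and $k=(n,\ldots,n)$. The maximum over $q>0$ of the number of distinct equilibria $\theta\in(-\pi,\pi]^n$ satisfying $$\omega_\nu=\frac1n\sum_{\mu=1}^nk_\nu k_\mu\sin(\theta_\nu-\theta_\mu)\ (\nu=1,\ldots,n),\qquad \sum_{\mu=1}^nk_\mu e^{i\theta_\mu}\in\mathbb{R}_{\ge0},$$ is $2^n-\binom{n}{n/2}$, and this maximum is attained for every $0<q<1$. *)

From Stdlib Require Import Reals Arith.
Open Scope R_scope.

Fixpoint rsum (n : nat) (f : nat -> R) : R :=
  match n with
  | O => 0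
  | S m => rsum m f + f m
  end.

Fixpoint binom (n k : nat) : nat :=
  match n, k with
  | _, O => 1
  | O, S _ => 0
  | S n', S k' => binom n' k' + binom n' k
  end.

(* Indices nu = 0..n-1 stand for 1..n.  omega has n/2 entries n*q then n/2 entries -n*q. *)
Definition omega (n : nat) (q : R) (nu : nat) : R :=
  if Nat.ltb nu (Nat.div n 2) then INR n * q else - (INR n * q).

Definition kvec (n : nat) (mu : nat) : R := INR n.

Definition is_equilibrium (n : nat) (om k : nat -> R) (theta : nat -> R) : Prop :=
  (forall nu, (nu < n)%nat -> - PI < theta nu <= PI) /\
  (forall nu, (nu < n)%nat ->
     om nu = / INR n * rsum n (fun mu => k nu * k mu * sin (theta nu - theta mu))) /\
  rsum n (fun mu => k mu * sin (theta mu)) = 0 /\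
  0 <= rsum n (fun mu => k mu * cos (theta mu)).

Definition distinct_pt (n : nat) (t1 t2 : nat -> R) : Prop :=
  exists nu, (nu < n)%nat /\ t1 nu <> t2 nu.

Definition distinct_equilibria (n : nat) (om k : nat -> R) (m : nat)
  (F : nat -> nat -> R) : Prop :=
  (forall j, (j < m)%nat -> is_equilibrium n om k (F j)) /\
  (forall i j, (i < m)%nat -> (j < m)%nat -> i <> j -> distinct_pt n (F i) (F j)).

From Stdlib Require Import Reals Arith Lra Lia List FinFun Classical.
Open Scope R_scope.

(* With all couplings equal, the equilibrium equations say that the order parameter
   C = sum_mu cos theta_mu is positive (the sines sum to 0) and that sin theta_nu * C = +-q, with
   the sign prescribed by omega.  Hence all phases share |sin| = s and |cos| = c, and if P of them
   have positive cosine, C = c (2P - n) > 0 forces P > n/2 while the equations reduce to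
   s c (2P - n) = q.  Given the cosine signs this leaves at most two points (s, c) of the unit
   circle, one on each side of the diagonal, and exactly two when q < 1.  Recording the cosine
   signs, all flipped when s > c, is thus an injection into the bit strings of length n with
   more or fewer than n/2 ones, and a bijection when q < 1. *)

Lemma rsum_ext n f g : (forall i, (i < n)%nat -> f i = g i) -> rsum n f = rsum n g.
Proof.
  induction n as [|n IH]; intros Hfg; simpl; [reflexivity|].
  rewrite IH by (intros; apply Hfg; lia).
  rewrite Hfg by lia; reflexivity.
Qed.

Lemma rsum_scal n a f : rsum n (fun i => a * f i) = a * rsum n f.
Proof. induction n as [|n IH]; simpl; [|rewrite IH]; ring. Qed.

Lemma rsum_minus n f g : rsum n (fun i => f i - g i) = rsum n f - rsum n g.
Proof. induction n as [|n IH]; simpl; [|rewrite IH]; ring. Qed.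

Definition signed (b : bool) (x : R) : R := if b then x else - x.

Lemma signed_sqr b x : signed b x * signed b x = x * x.
Proof. destruct b; simpl; ring. Qed.

Lemma Rabs_signed b x : Rabs (signed b x) = Rabs x.
Proof. destruct b; simpl; [|rewrite Rabs_Ropp]; reflexivity. Qed.

Definition ntrue (l : list bool) : nat := count_occ Bool.bool_dec l true.

Lemma ntrue_le l : (ntrue l <= length l)%nat.
Proof. apply count_occ_bound. Qed.

Definition imbalance (l : list bool) : R := 2 * INR (ntrue l) - INR (length l).

Lemma rsum_signed n g a :
  rsum n (fun i => signed (g i) a) = a * imbalance (map g (seq 0 n)).
Proof.
  induction n as [|n IH]; [unfold imbalance; simpl; ring|].
  cbn [rsum]; rewrite IH; unfold imbalance, ntrue.
  rewrite seq_S, map_app, count_occ_app, length_app, !length_map, length_seq, !plus_INR.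
  simpl map; destruct (g n); simpl; ring.
Qed.

Lemma ntrue_map_xorb b l :
  ntrue (map (xorb b) l) = if b then (length l - ntrue l)%nat else ntrue l.
Proof.
  induction l as [|a l IH]; [destruct b; reflexivity|].
  pose proof (ntrue_le l); unfold ntrue in *.
  destruct b, a; cbn -[Nat.sub] in *; lia.
Qed.

Lemma map_xorb_involutive b l : map (xorb b) (map (xorb b) l) = l.
Proof.
  rewrite map_map; rewrite <- (map_id l) at 2.
  apply map_ext; intros a; destruct a, b; reflexivity.
Qed.

Lemma ntrue_lower_half n h : ntrue (map (fun i => Nat.ltb i h) (seq 0 n)) = Nat.min n h.
Proof.
  unfold ntrue; induction n as [|n IH]; [reflexivity|].
  rewrite seq_S, map_app, count_occ_app, IH; cbn [map Nat.add].
  destruct (Nat.ltb n h) eqn:E; [apply Nat.ltb_lt in E | apply Nat.ltb_ge in E];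
    cbn -[Nat.min]; lia.
Qed.

Lemma rsum_signed_lower_half h a : rsum (2 * h) (fun i => signed (Nat.ltb i h) a) = 0.
Proof.
  rewrite rsum_signed; unfold imbalance.
  rewrite ntrue_lower_half, length_map, length_seq, Nat.min_r by lia.
  rewrite mult_INR; simpl; ring.
Qed.

Lemma imbalance_pos l h : length l = (2 * h)%nat -> 0 < imbalance l <-> (h < ntrue l)%nat.
Proof.
  intros Hl; unfold imbalance; rewrite Hl, mult_INR; simpl (INR 2).
  split; intros H; [apply INR_lt | apply lt_INR in H]; lra.
Qed.

Lemma ntrue_map_xorb_majority b l h : length l = (2 * h)%nat -> (h < ntrue l)%nat ->
  Nat.ltb (ntrue (map (xorb b) l)) h = b /\ ntrue (map (xorb b) l) <> h.
Proof.
  intros Hl Hh; rewrite ntrue_map_xorb.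
  pose proof (ntrue_le l).
  destruct b; split; try lia; [apply Nat.ltb_lt | apply Nat.ltb_ge]; lia.
Qed.

Lemma nth_map_seq (A : Type) (f : nat -> A) n nu d :
  (nu < n)%nat -> nth nu (map f (seq 0 n)) d = f nu.
Proof.
  intros Hnu; rewrite nth_indep with (d' := f 0%nat) by (rewrite length_map, length_seq; lia).
  rewrite map_nth, seq_nth by lia; reflexivity.
Qed.

Lemma map_nth_seq (A : Type) (l : list A) d :
  map (fun nu => nth nu l d) (seq 0 (length l)) = l.
Proof.
  apply nth_ext with (d := d) (d' := d); rewrite length_map, length_seq; [reflexivity|].
  intros nu Hnu; apply nth_map_seq; assumption.
Qed.

Fixpoint bool_lists (n : nat) : list (list bool) :=
  match n with
  | O => nil :: nil
  | S n => map (cons false) (bool_lists n) ++ map (cons true) (bool_lists n)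
  end.

Lemma length_bool_lists n : length (bool_lists n) = (2 ^ n)%nat.
Proof.
  induction n as [|n IH]; simpl; [reflexivity|].
  rewrite length_app, !length_map, IH; lia.
Qed.

Lemma in_bool_lists n l : In l (bool_lists n) <-> length l = n.
Proof.
  revert l; induction n as [|n IH]; intros l; simpl.
  - destruct l; simpl; split; intros H; try lia; try tauto.
    destruct H as [H|[]]; discriminate.
  - rewrite in_app_iff, !in_map_iff. split.
    + intros [[l' [<- Hl']]|[l' [<- Hl']]]; simpl; rewrite (proj1 (IH l') Hl'); reflexivity.
    + destruct l as [|b l]; simpl; intros Hl; [discriminate|].
      destruct b; [right|left]; exists l; split; auto; apply IH; lia.
Qed.

Lemma NoDup_bool_lists n : NoDup (bool_lists n).
Proof.
  assert (Hcons : forall (b : bool) L, NoDup L -> NoDup (map (cons b) L)).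
  { intros b L HL; apply Injective_map_NoDup; auto.
    intros l l' E; injection E; auto. }
  induction n as [|n IH]; simpl; [repeat constructor; simpl; tauto|].
  apply NoDup_app; auto.
  intros l H1 H2; apply in_map_iff in H1, H2.
  destruct H1 as [l1 [<- _]], H2 as [l2 [E _]]; discriminate.
Qed.

Lemma count_bool_lists n k :
  length (filter (fun l => Nat.eqb (ntrue l) k) (bool_lists n)) = binom n k.
Proof.
  revert k; induction n as [|n IH]; intros k; [destruct k; reflexivity|].
  simpl; rewrite filter_app, length_app, !filter_map_swap, !length_map.
  unfold ntrue in *; simpl.
  destruct k as [|k].
  - rewrite IH, filter_false; destruct n; reflexivity.
  - rewrite !IH; simpl; lia.
Qed.

Definition unbalanced_lists (n h : nat) : list (list bool) :=
  filter (fun l => negb (Nat.eqb (ntrue l) h)) (bool_lists n).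

Lemma length_unbalanced_lists n h :
  length (unbalanced_lists n h) = (2 ^ n - binom n h)%nat.
Proof.
  pose proof (filter_length (fun l => Nat.eqb (ntrue l) h) (bool_lists n)) as E.
  rewrite count_bool_lists, length_bool_lists in E.
  unfold unbalanced_lists; lia.
Qed.

Lemma in_unbalanced_lists n h l :
  In l (unbalanced_lists n h) <-> length l = n /\ ntrue l <> h.
Proof.
  unfold unbalanced_lists; rewrite filter_In, in_bool_lists, Bool.negb_true_iff, Nat.eqb_neq.
  reflexivity.
Qed.

Lemma NoDup_unbalanced_lists n h : NoDup (unbalanced_lists n h).
Proof. apply NoDup_filter, NoDup_bool_lists. Qed.

Lemma angle_eq_of_sin_cos a b : -PI < a <= PI -> -PI < b <= PI ->
  sin a = sin b -> cos a = cos b -> a = b.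
Proof.
  intros Ha Hb Hs Hc.
  set (x := (a - b) / 2).
  assert (Hsx : sin x = 0).
  { assert (H1 : cos (2 * x) = 1).
    { replace (2 * x) with (a - b) by (unfold x; field).
      rewrite cos_minus, <- Hs, <- Hc; pose proof (sin2_cos2 a); unfold Rsqr in *; lra. }
    rewrite cos_2a_sin in H1; nra. }
  destruct (Rtotal_order x 0) as [Hx|[Hx|Hx]].
  - assert (Hneg : 0 < sin (- x)) by (apply sin_gt_0; unfold x in *; lra).
    rewrite sin_neg in Hneg; lra.
  - unfold x in Hx; lra.
  - assert (0 < sin x) by (apply sin_gt_0; unfold x in *; lra); lra.
Qed.

Lemma circle_point_eq_of_mul s c s' c' : 0 < s -> 0 < c -> 0 < s' -> 0 < c' ->
  s * s + c * c = 1 -> s' * s' + c' * c' = 1 -> s * c = s' * c' ->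
  (c < s <-> c' < s') -> s = s' /\ c = c'.
Proof.
  intros; assert (s + c = s' + c') by nra.
  destruct (Rlt_dec c s).
  - assert (c' < s') by tauto; assert (s - c = s' - c') by nra; lra.
  - assert (~ c' < s') by tauto; assert (c - s = c' - s') by nra; lra.
Qed.

Definition Rpos (x : R) : bool := if Rlt_dec 0 x then true else false.

Lemma Rpos_signed b x : 0 < x -> Rpos (signed b x) = b.
Proof. intros Hx; unfold Rpos; destruct b, (Rlt_dec _ _); simpl in *; lra. Qed.

Lemma Rpos_true x : Rpos x = true <-> 0 < x.
Proof. unfold Rpos; destruct (Rlt_dec 0 x); split; intros; auto; discriminate. Qed.

Lemma cos_signed_abs a b : sin a * sin a = sin b * sin b ->
  cos a = signed (Rpos (cos a)) (Rabs (cos b)).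
Proof.
  intros Hs.
  assert (Hc : cos a * cos a = Rabs (cos b) * Rabs (cos b)).
  { rewrite <- Rabs_mult, Rabs_right by nra.
    pose proof (sin2_cos2 a); pose proof (sin2_cos2 b); unfold Rsqr in *; lra. }
  pose proof (Rabs_pos (cos b)).
  unfold Rpos; destruct (Rlt_dec 0 (cos a)); simpl; nra.
Qed.

Definition quadrant_angle (up right : bool) (a : R) : R :=
  if right then signed up a else signed up (PI - a).

Lemma sin_quadrant_angle up right a : sin (quadrant_angle up right a) = signed up (sin a).
Proof. destruct up, right; simpl; rewrite ?sin_neg, ?sin_PI_x; reflexivity. Qed.

Lemma cos_quadrant_angle up right a : cos (quadrant_angle up right a) = signed right (cos a).
Proof.
  destruct up, right; simpl; rewrite ?cos_neg, ?Rtrigo_facts.cos_pi_minus; reflexivity.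
Qed.

Lemma quadrant_angle_bound up right a : 0 < a < PI / 2 ->
  -PI < quadrant_angle up right a <= PI.
Proof. pose proof PI_RGT_0; destruct up, right; simpl; lra. Qed.

(* The two solutions [a] of [sin (2 a) = x] in [(0, PI/2)], on either side of [PI/4]. *)
Definition branch_angle (x : R) (steep : bool) : R :=
  if steep then PI / 2 - asin x / 2 else asin x / 2.

Lemma branch_angle_spec x steep : 0 < x < 1 ->
  let a := branch_angle x steep in
  0 < a < PI / 2 /\ 2 * sin a * cos a = x /\ Rpos (sin a - cos a) = steep.
Proof.
  intros Hx a.
  set (b := asin x).
  assert (Hsb : sin b = x) by (apply sin_asin; lra).
  assert (Hb : - (PI / 2) < b < PI / 2) by (apply asin_bound_lt; lra).
  assert (Hb0 : 0 < b).
  { destruct (Rlt_dec 0 b) as [|Hb0]; [assumption|].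
    assert (Hneg : 0 <= sin (- b)) by (apply sin_ge_0; lra).
    rewrite sin_neg in Hneg; lra. }
  assert (Hcb : 0 < cos b) by (apply cos_gt_0; lra).
  assert (Hs2 : sin b = 2 * sin (b / 2) * cos (b / 2))
    by (rewrite <- sin_2a; f_equal; field).
  assert (Hc2 : cos b = cos (b / 2) * cos (b / 2) - sin (b / 2) * sin (b / 2))
    by (rewrite <- cos_2a; f_equal; field).
  assert (0 < sin (b / 2)) by (apply sin_gt_0; lra).
  assert (0 < cos (b / 2)) by (apply cos_gt_0; lra).
  unfold a, branch_angle; fold b; destruct steep.
  - rewrite sin_shift, cos_shift; split; [lra|]; split; [lra|].
    unfold Rpos; destruct (Rlt_dec _ _); [reflexivity | nra].
  - split; [lra|]; split; [lra|].
    unfold Rpos; destruct (Rlt_dec _ _); [nra | reflexivity].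
Qed.

Lemma coupling_sum n th nu :
  rsum n (fun mu => kvec n nu * kvec n mu * sin (th nu - th mu)) =
  INR n * INR n * (sin (th nu) * rsum n (fun mu => cos (th mu))
                   - cos (th nu) * rsum n (fun mu => sin (th mu))).
Proof.
  unfold kvec; rewrite <- rsum_scal, <- rsum_scal, <- rsum_minus, <- rsum_scal.
  apply rsum_ext; intros mu _; rewrite sin_minus; ring.
Qed.

Lemma div_double_2 h : Nat.div (2 * h) 2 = h.
Proof. rewrite Nat.mul_comm, Nat.div_mul; lia. Qed.

Lemma omega_half h q nu : omega (2 * h) q nu = signed (Nat.ltb nu h) (INR (2 * h) * q).
Proof. unfold omega; rewrite div_double_2; reflexivity. Qed.

Definition phase_locked (n h : nat) (s c : R) (p : nat -> bool) (th : nat -> R) : Prop :=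
  forall nu, (nu < n)%nat -> sin (th nu) = signed (Nat.ltb nu h) s /\ cos (th nu) = signed (p nu) c.

Definition cos_signs (n : nat) (th : nat -> R) : list bool :=
  map (fun nu => Rpos (cos (th nu))) (seq 0 n).

(* At an equilibrium all phases share |sin| and |cos|, so phase 0 is representative. *)
Definition steep (th : nat -> R) : bool := Rpos (Rabs (sin (th 0%nat)) - Rabs (cos (th 0%nat))).

Definition code (n : nat) (th : nat -> R) : list bool := map (xorb (steep th)) (cos_signs n th).

Lemma length_cos_signs n th : length (cos_signs n th) = n.
Proof. unfold cos_signs; rewrite length_map, length_seq; reflexivity. Qed.

Lemma steep_phase_locked n h s c p th : (0 < n)%nat -> 0 < s -> 0 < c ->
  phase_locked n h s c p th -> steep th = Rpos (s - c).
Proof.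
  intros Hn Hs Hc Hlock; unfold steep.
  destruct (Hlock 0%nat Hn) as [-> ->]; rewrite !Rabs_signed, !Rabs_right by lra.
  reflexivity.
Qed.

Section Equilibria.

Variables (h : nat) (q : R).
Hypotheses (Hh : (0 < h)%nat) (Hq : 0 < q).

Lemma phase_locked_equilibrium s c p th : 0 < s -> 0 < c ->
  (forall nu, (nu < 2 * h)%nat -> -PI < th nu <= PI) -> phase_locked (2 * h) h s c p th ->
  s * c * imbalance (map p (seq 0 (2 * h))) = q ->
  is_equilibrium (2 * h) (omega (2 * h) q) (kvec (2 * h)) th.
Proof.
  intros Hs Hc Hrange Hlock Hsc.
  assert (HS : rsum (2 * h) (fun mu => sin (th mu)) = 0).
  { rewrite (rsum_ext _ _ (fun mu => signed (Nat.ltb mu h) s)) by (intros; apply Hlock; auto).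
    apply rsum_signed_lower_half. }
  assert (HC : rsum (2 * h) (fun mu => cos (th mu)) = c * imbalance (map p (seq 0 (2 * h)))).
  { rewrite <- rsum_signed; apply rsum_ext; intros; apply Hlock; auto. }
  assert (Hn : 0 < INR (2 * h)) by (apply lt_0_INR; lia).
  split; [exact Hrange|]; split; [|split].
  - intros nu Hnu; rewrite coupling_sum, HS, HC, omega_half, (proj1 (Hlock nu Hnu)), <- Hsc.
    destruct (Nat.ltb nu h); unfold signed; field; lra.
  - unfold kvec; rewrite rsum_scal, HS; ring.
  - unfold kvec; rewrite rsum_scal, HC; nra.
Qed.

Lemma equilibrium_order_parameter th :
  is_equilibrium (2 * h) (omega (2 * h) q) (kvec (2 * h)) th ->
  let C := rsum (2 * h) (fun mu => cos (th mu)) in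
  0 < C /\ forall nu, (nu < 2 * h)%nat -> sin (th nu) * C = signed (Nat.ltb nu h) q.
Proof.
  intros [_ [Heq [Hsin Hcos]]] C.
  unfold kvec in Hsin, Hcos; rewrite rsum_scal in Hsin, Hcos; fold C in Hcos.
  set (S := rsum (2 * h) (fun mu => sin (th mu))) in *.
  assert (Hn : 0 < INR (2 * h)) by (apply lt_0_INR; lia).
  assert (HS : S = 0) by nra.
  assert (Hkey : forall nu, (nu < 2 * h)%nat -> sin (th nu) * C = signed (Nat.ltb nu h) q).
  { intros nu Hnu; specialize (Heq nu Hnu).
    rewrite coupling_sum, omega_half in Heq; fold C S in Heq; rewrite HS in Heq.
    replace (/ INR (2 * h) * _) with (INR (2 * h) * (sin (th nu) * C)) in Heq by (field; lra).
    destruct (Nat.ltb nu h); unfold signed in *; nra. }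
  split; [|exact Hkey].
  assert (Hkey0 := Hkey 0%nat ltac:(lia)).
  replace (Nat.ltb 0 h) with true in Hkey0 by (symmetry; apply Nat.ltb_lt; lia).
  assert (0 <= C) by (apply (Rmult_le_reg_l (INR (2 * h))); lra).
  destruct (Req_dec C 0) as [E|]; [rewrite E in Hkey0; simpl in Hkey0; lra | lra].
Qed.

Lemma equilibrium_phase_locked th :
  is_equilibrium (2 * h) (omega (2 * h) q) (kvec (2 * h)) th ->
  exists s c, 0 < s /\ 0 < c /\ s * s + c * c = 1 /\
    phase_locked (2 * h) h s c (fun nu => Rpos (cos (th nu))) th /\
    s * c * imbalance (cos_signs (2 * h) th) = q.
Proof.
  intros E; destruct (equilibrium_order_parameter th E) as [HC Hkey].
  set (C := rsum (2 * h) (fun mu => cos (th mu))) in *.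
  assert (Hkey0 := Hkey 0%nat ltac:(lia)).
  replace (Nat.ltb 0 h) with true in Hkey0 by (symmetry; apply Nat.ltb_lt; lia).
  unfold signed in Hkey0.
  set (s := sin (th 0%nat)) in *.
  assert (Hs : 0 < s) by nra.
  assert (Hlock_sin : forall nu, (nu < 2 * h)%nat -> sin (th nu) = signed (Nat.ltb nu h) s).
  { intros nu Hnu; specialize (Hkey nu Hnu).
    apply (Rmult_eq_reg_r C); [|lra]; destruct (Nat.ltb nu h); unfold signed in *; lra. }
  set (c := Rabs (cos (th 0%nat))).
  assert (Hlock : phase_locked (2 * h) h s c (fun nu => Rpos (cos (th nu))) th).
  { intros nu Hnu; split; [auto|].
    apply cos_signed_abs; rewrite Hlock_sin, signed_sqr; auto. }
  assert (HCc : C = c * imbalance (cos_signs (2 * h) th)).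
  { unfold cos_signs; rewrite <- rsum_signed; apply rsum_ext; intros; apply Hlock; auto. }
  assert (Hc : 0 < c).
  { destruct (Rabs_pos (cos (th 0%nat))) as [|E']; [assumption|].
    fold c in E'; rewrite <- E' in HCc; lra. }
  exists s, c; split; [|split; [|split; [|split]]]; auto.
  - unfold c; rewrite <- Rabs_mult, Rabs_right by nra.
    pose proof (sin2_cos2 (th 0%nat)) as Hpyth; unfold Rsqr in Hpyth; fold s in Hpyth; lra.
  - rewrite <- Hkey0, HCc; ring.
Qed.

Lemma ntrue_cos_signs th : is_equilibrium (2 * h) (omega (2 * h) q) (kvec (2 * h)) th ->
  (h < ntrue (cos_signs (2 * h) th))%nat.
Proof.
  intros E; destruct (equilibrium_phase_locked th E) as (s & c & Hs & Hc & _ & _ & Hsc).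
  assert (0 < s * c) by (apply Rmult_lt_0_compat; assumption).
  apply imbalance_pos; [apply length_cos_signs | nra].
Qed.

Lemma ntrue_code th : is_equilibrium (2 * h) (omega (2 * h) q) (kvec (2 * h)) th ->
  Nat.ltb (ntrue (code (2 * h) th)) h = steep th /\ ntrue (code (2 * h) th) <> h.
Proof.
  intros E; apply ntrue_map_xorb_majority; [apply length_cos_signs | apply ntrue_cos_signs, E].
Qed.

Lemma equilibrium_code_inj th th' :
  is_equilibrium (2 * h) (omega (2 * h) q) (kvec (2 * h)) th ->
  is_equilibrium (2 * h) (omega (2 * h) q) (kvec (2 * h)) th' ->
  code (2 * h) th = code (2 * h) th' -> forall nu, (nu < 2 * h)%nat -> th nu = th' nu.
Proof.
  intros E E' Hcode.
  destruct (equilibrium_phase_locked th E) as (s & c & Hs & Hc & Hsc1 & Hlock & Hq1).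
  destruct (equilibrium_phase_locked th' E') as (s' & c' & Hs' & Hc' & Hsc1' & Hlock' & Hq1').
  assert (Hsteep : steep th = steep th').
  { rewrite <- (proj1 (ntrue_code th E)), <- (proj1 (ntrue_code th' E')), Hcode; reflexivity. }
  assert (Hsigns : cos_signs (2 * h) th = cos_signs (2 * h) th').
  { rewrite <- (map_xorb_involutive (steep th) (cos_signs _ th)).
    unfold code in Hcode; rewrite Hcode, Hsteep; apply map_xorb_involutive. }
  assert (Hp : forall nu, (nu < 2 * h)%nat -> Rpos (cos (th nu)) = Rpos (cos (th' nu))).
  { intros nu Hnu; unfold cos_signs in Hsigns.
    rewrite <- (nth_map_seq _ (fun nu => Rpos (cos (th nu))) (2 * h) nu false Hnu), Hsigns.
    apply nth_map_seq, Hnu. }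
  assert (Hprod : s * c = s' * c').
  { rewrite Hsigns in Hq1.
    assert (0 < s * c) by (apply Rmult_lt_0_compat; assumption).
    assert (0 < imbalance (cos_signs (2 * h) th')) by nra.
    apply (Rmult_eq_reg_r (imbalance (cos_signs (2 * h) th'))); lra. }
  assert (Hside : c < s <-> c' < s').
  { rewrite (steep_phase_locked (2 * h) h _ _ _ _ ltac:(lia) Hs Hc Hlock),
      (steep_phase_locked (2 * h) h _ _ _ _ ltac:(lia) Hs' Hc' Hlock') in Hsteep.
    rewrite <- (Rlt_0_minus c s), <- (Rlt_0_minus c' s'), <- !Rpos_true, Hsteep.
    reflexivity. }
  destruct (circle_point_eq_of_mul s c s' c') as [<- <-]; auto.
  intros nu Hnu; destruct (Hlock nu Hnu) as [Hsin Hcos], (Hlock' nu Hnu) as [Hsin' Hcos'].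
  apply angle_eq_of_sin_cos; [apply E, Hnu | apply E', Hnu | congruence |].
  rewrite Hcos, Hcos', Hp by exact Hnu; reflexivity.
Qed.

Definition code_steep (b : list bool) : bool := Nat.ltb (ntrue b) h.

Definition code_signs (b : list bool) : list bool := map (xorb (code_steep b)) b.

Definition decode (b : list bool) (nu : nat) : R :=
  quadrant_angle (Nat.ltb nu h) (nth nu (code_signs b) false)
    (branch_angle (2 * q / imbalance (code_signs b)) (code_steep b)).

Lemma ntrue_code_signs b : length b = (2 * h)%nat -> ntrue b <> h ->
  (h < ntrue (code_signs b))%nat.
Proof.
  intros Hb Hbh; unfold code_signs, code_steep; rewrite ntrue_map_xorb.
  pose proof (ntrue_le b); destruct (Nat.ltb_spec (ntrue b) h); lia.
Qed.

Lemma decode_spec b : q < 1 -> length b = (2 * h)%nat -> ntrue b <> h ->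
  is_equilibrium (2 * h) (omega (2 * h) q) (kvec (2 * h)) (decode b) /\
  code (2 * h) (decode b) = b.
Proof.
  intros Hq1 Hb Hbh.
  set (signs := code_signs b).
  assert (Hlen : length signs = (2 * h)%nat)
    by (unfold signs, code_signs; rewrite length_map; auto).
  assert (Himb : 2 <= imbalance signs).
  { pose proof (ntrue_code_signs b Hb Hbh) as H; fold signs in H.
    apply le_INR in H; rewrite S_INR in H.
    unfold imbalance; rewrite Hlen, mult_INR; simpl (INR 2); lra. }
  assert (Hx : 0 < 2 * q / imbalance signs < 1).
  { split; [apply Rdiv_lt_0_compat; lra|].
    apply (Rmult_lt_reg_r (imbalance signs)); [lra|]; field_simplify; lra. }
  destruct (branch_angle_spec _ (code_steep b) Hx) as (Ha & Hprod & Hsteep).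
  set (a := branch_angle (2 * q / imbalance signs) (code_steep b)) in *.
  assert (Hsa : 0 < sin a) by (apply sin_gt_0; lra).
  assert (Hca : 0 < cos a) by (apply cos_gt_0; lra).
  assert (Hlock : phase_locked (2 * h) h (sin a) (cos a) (fun nu => nth nu signs false) (decode b)).
  { intros nu _; unfold decode; fold signs a.
    rewrite sin_quadrant_angle, cos_quadrant_angle; split; reflexivity. }
  assert (Hmap : map (fun nu => nth nu signs false) (seq 0 (2 * h)) = signs)
    by (rewrite <- Hlen; apply map_nth_seq).
  split.
  - apply (phase_locked_equilibrium (sin a) (cos a) (fun nu => nth nu signs false)); auto.
    + intros nu _; apply quadrant_angle_bound, Ha.
    + rewrite Hmap; apply (Rmult_eq_reg_l 2); [|lra].
      replace (2 * (sin a * cos a * imbalance signs)) with (2 * sin a * cos a * imbalance signs)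
        by ring.
      rewrite Hprod; field; lra.
  - assert (Hcs : cos_signs (2 * h) (decode b) = signs).
    { rewrite <- Hmap; apply map_ext_in; intros nu Hnu.
      apply in_seq in Hnu; rewrite (proj2 (Hlock nu ltac:(lia))); apply Rpos_signed, Hca. }
    unfold code; rewrite Hcs, (steep_phase_locked (2 * h) h _ _ _ _ ltac:(lia) Hsa Hca Hlock).
    rewrite Hsteep.
    apply map_xorb_involutive.
Qed.

Lemma distinct_pt_of_code_neq n th th' : (0 < n)%nat ->
  code n th <> code n th' -> distinct_pt n th th'.
Proof.
  intros Hn Hneq; apply NNPP; intros Hnd; apply Hneq.
  assert (Heq : forall nu, (nu < n)%nat -> th nu = th' nu).
  { intros nu Hnu; apply NNPP; intros Hne; apply Hnd; exists nu; auto. }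
  unfold code, steep, cos_signs; rewrite (Heq 0%nat Hn).
  apply f_equal, map_ext_in; intros nu Hnu; apply in_seq in Hnu; rewrite Heq by lia.
  reflexivity.
Qed.

Lemma distinct_equilibria_le m F :
  distinct_equilibria (2 * h) (omega (2 * h) q) (kvec (2 * h)) m F ->
  (m <= length (unbalanced_lists (2 * h) h))%nat.
Proof.
  intros [HE HD].
  replace m with (length (map (fun j => code (2 * h) (F j)) (seq 0 m)))
    by (rewrite length_map, length_seq; reflexivity).
  apply NoDup_incl_length.
  - apply Injective_map_NoDup_in; [|apply seq_NoDup].
    intros i j Hi Hj Hij; apply in_seq in Hi, Hj.
    destruct (Nat.eq_dec i j) as [|Hne]; [assumption|exfalso].
    destruct (HD i j ltac:(lia) ltac:(lia) Hne) as [nu [Hnu Hdiff]].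
    apply Hdiff, (equilibrium_code_inj (F i) (F j)); auto; apply HE; lia.
  - intros l Hl; apply in_map_iff in Hl; destruct Hl as [j [<- Hj]]; apply in_seq in Hj.
    apply in_unbalanced_lists; split; [unfold code; rewrite length_map; apply length_cos_signs|].
    apply ntrue_code, HE; lia.
Qed.

Lemma exists_distinct_equilibria : q < 1 -> exists F,
  distinct_equilibria (2 * h) (omega (2 * h) q) (kvec (2 * h))
    (length (unbalanced_lists (2 * h) h)) F.
Proof.
  intros Hq1; set (L := unbalanced_lists (2 * h) h).
  assert (HL : forall j, (j < length L)%nat ->
    length (nth j L nil) = (2 * h)%nat /\ ntrue (nth j L nil) <> h)
    by (intros j Hj; apply in_unbalanced_lists, nth_In, Hj).
  exists (fun j => decode (nth j L nil)); split.
  - intros j Hj; destruct (HL j Hj); apply decode_spec; auto.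
  - intros i j Hi Hj Hij; apply distinct_pt_of_code_neq; [lia|].
    destruct (HL i Hi) as [Hli Hni], (HL j Hj) as [Hlj Hnj].
    rewrite (proj2 (decode_spec _ Hq1 Hli Hni)), (proj2 (decode_spec _ Hq1 Hlj Hnj)).
    intros E; apply Hij, (proj1 (NoDup_nth L nil) (NoDup_unbalanced_lists _ _) i j Hi Hj E).
Qed.

End Equilibria.

Theorem corollary2 (n : nat) (Hn : (2 <= n)%nat) (Hev : Nat.Even n) :
  (* for every q > 0 the number of distinct equilibria is at most 2^n - C(n, n/2) *)
  (forall q : R, 0 < q ->
     forall (m : nat) (F : nat -> nat -> R),
       distinct_equilibria n (omega n q) (kvec n) m F ->
       (m <= 2 ^ n - binom n (Nat.div n 2))%nat) /\
  (* and for every 0 < q < 1 this bound is attained *)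
  (forall q : R, 0 < q < 1 ->
     exists F : nat -> nat -> R,
       distinct_equilibria n (omega n q) (kvec n) (2 ^ n - binom n (Nat.div n 2))%nat F).
Proof.
  destruct Hev as [h ->].
  assert (Hh : (0 < h)%nat) by lia.
  rewrite div_double_2, <- length_unbalanced_lists.
  split.
  - intros q Hq; apply distinct_equilibria_le; assumption.
  - intros q [Hq Hq1]; apply exists_distinct_equilibria; assumption.
Qed.
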